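(* Let $X$ be a finite discrete space with at least two elements, $\Gamma$ a nonempty countable set, $\varphi:\Gamma\to\Gamma$ any map. Then $(X^\Gamma,\sigma_\varphi)$ is transitive distributional chaotic if and only if $\varphi$ is one-to-one and has no periodic point.
   Context: $X^\Gamma$ has the product topology and a fixed compatible metric $d$; $\sigma_\varphi((x_\alpha)_{\alpha\in\Gamma})=(x_{\varphi(\alpha)})_{\alpha\in\Gamma}$. For $f=\sigma_\varphi$, $x,y\in X^\Gamma$, $t>0$: $\xi(x,y,t,n)=\#\{i\in\{0,\dots,n-1\}:d(f^i(x),f^i(y))<t\}$, $F_{xy}(t)=\liminf_n \xi(x,y,t,n)/n$, $F^*_{xy}(t)=\limsup_n\xi(x,y,t,n)/n$. A point $x$ is a transitive point if $\{f^n(x):n\ge0\}$ is dense. The system is transitive distributional chaotic if there exist a dense uncountable set $A\subseteq X^\Gamma$ consisting of transitive points and $\varepsilon>0$ such that for all distinct $x,y\in A$: $F^*_{xy}(s)=1$ for every $s>0$ and $F_{xy}(\varepsilon)=0$. *)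

From mathcomp Require Import all_boot all_order all_algebra.
From mathcomp Require Import all_classical all_reals all_analysis.
Set Implicit Arguments. Unset Strict Implicit. Unset Printing Implicit Defensive.
Import Order.TTheory GRing.Theory Num.Theory.
Local Open Scope classical_set_scope.
Local Open Scope ring_scope.

Section Defs.
Variables (R : realType) (X : finType) (G : countType).

Definition sigma_phi (phi : G -> G) (x : G -> X) : G -> X := fun a => x (phi a).

Definition prod_open (U : set (G -> X)) : Prop :=
  forall x, U x -> exists F : seq G,
    forall y, (forall a, a \in F -> y a = x a) -> U y.

Definition metric_open (d : (G -> X) -> (G -> X) -> R) (U : set (G -> X)) : Prop :=
  forall x, U x -> exists2 e : R, 0 < e & forall y, d x y < e -> U y.

Definition compatible_metric (d : (G -> X) -> (G -> X) -> R) : Prop :=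
  [/\ forall x y, 0 <= d x y,
      forall x y, d x y = 0 <-> x = y,
      forall x y, d x y = d y x,
      forall x y z, d x z <= d x y + d y z &
      forall U, prod_open U <-> metric_open d U].

Definition prod_dense (A : set (G -> X)) : Prop :=
  forall U, prod_open U -> (exists x, U x) -> exists a, A a /\ U a.

Definition transitive_point (f : (G -> X) -> (G -> X)) (x : G -> X) : Prop :=
  prod_dense [set ssrnat.iter n f x | n in [set: nat]].

Definition xi (d : (G -> X) -> (G -> X) -> R) (f : (G -> X) -> (G -> X))
  (x y : G -> X) (t : R) (n : nat) : nat :=
  #|[set i : 'I_n | d (ssrnat.iter i f x) (ssrnat.iter i f y) < t]|.

Definition Flow d f x y t : \bar R :=
  limn_einf (fun n => ((xi d f x y t n)%:R / n%:R)%:E).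
Definition Fup d f x y t : \bar R :=
  limn_esup (fun n => ((xi d f x y t n)%:R / n%:R)%:E).

Definition transitive_distributional_chaotic
  (d : (G -> X) -> (G -> X) -> R) (f : (G -> X) -> (G -> X)) : Prop :=
  exists (A : set (G -> X)) (eps : R),
    [/\ prod_dense A, ~ countable A, (forall x, A x -> transitive_point f x),
        0 < eps &
        forall x y, A x -> A y -> x <> y ->
          (forall s, 0 < s -> Fup d f x y s = 1%E) /\ Flow d f x y eps = 0%E].

End Defs.

From mathcomp Require Import all_boot all_order all_algebra.
From mathcomp Require Import all_classical all_reals all_analysis.
From mathcomp Require Import lra zify.
Import Order.TTheory GRing.Theory Num.Theory.
Local Open Scope classical_set_scope.
Local Open Scope ring_scope.

(* Necessity: if phi a = phi b with a <> b, the coordinates a and b agree along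
   the orbit from time 1 on, so the orbit cannot visit both cylinders
   {x a = c, x b = c'} and {x a = c', x b = c}; if phi^n a = a, the orbit stays
   in the cylinder "constant v on the cycle of a" once it has entered it, so it
   cannot enter this cylinder for both v = c and v = c'.

   Sufficiency: let I_k = init_elems G k be the first k points of Gamma. As
   phi is injective and aperiodic, the orbits of the points of I_k eventually
   avoid I_k, so one can choose time windows [start k, stop k), each longer
   than k times its start, so far apart that the orbit segments
   {phi^t b | b in I_k, t in window k} are pairwise disjoint and, for m <= k,
   disjoint from I_m. Hence, given a seed (a cylinder on I_m and a bit
   sequence), the coordinates of a point can be prescribed freely on these
   segments for k >= m: for k = 0 mod 3 every point is constant c on I_k, so
   any two points are close on a proportion k/(k+1) of the times up to stop k
   (F* = 1); for k = 1 mod 3 the point is constant c or c' on I_k according to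
   one bit of its seed, so two points with different seeds are far apart on
   such windows (F = 0); at time start k for k = 2 mod 3 the orbit copies an
   arbitrary cylinder (transitivity). Seeds with the same cylinder and
   different bit sequences give uncountably many points. *)

Lemma inj_iter {T : Type} {f : T -> T} n : injective f -> injective (iter n f).
Proof. by move=> f_inj; elim: n => [//|n IHn] x y /= /f_inj /IHn. Qed.

Lemma iter_mul_periodic (T : Type) (f : T -> T) n a q :
  iter n f a = a -> iter (q * n) f a = a.
Proof. by move=> per; elim: q => [//|q IHq]; rewrite mulSn iterD IHq per. Qed.

Lemma iter_sigma_phi (X : finType) (G : countType) (phi : G -> G) n (x : G -> X) a :
  iter n (sigma_phi phi) x a = x (iter n phi a).
Proof. by elim: n a => [//|n IHn] a; rewrite iterS /sigma_phi IHn -iterSr. Qed.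

Lemma cantor_bits (h : (nat -> bool) -> nat) : ~ injective h.
Proof.
move=> h_inj; pose diag n := `[< exists b, h b = n /\ b n = false >].
case E: (diag (h diag)).
  by move/asboolP: (E) => [b [/h_inj ->]]; rewrite E.
suff : diag (h diag) by rewrite E.
by apply/asboolP; exists diag.
Qed.

Lemma not_countable_of_bits (T : Type) (A : set T) (f : (nat -> bool) -> T) :
  injective f -> (forall b, A (f b)) -> ~ countable A.
Proof.
move=> f_inj Af /countable_injP [g g_inj]; apply: (cantor_bits (g \o f)) => b1 b2 /= e.
exact/f_inj/(g_inj _ _ (mem_set (Af b1)) (mem_set (Af b2))).
Qed.

Definition init_elems (G : countType) (k : nat) : seq G := pmap pickle_inv (iota 0 k).

Section Cylinders.
Context {X : finType} {G : countType}.

Lemma mem_init_elems g k : (g \in init_elems G k) = (pickle g < k)%N.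
Proof.
rewrite /init_elems mem_pmap; apply/mapP/idP => [[n]|gk].
  rewrite mem_iota add0n => /andP[_ nk] eg.
  by have := @pickle_invK G n; rewrite -eg /= => ->.
by exists (pickle g); rewrite ?pickleK_inv // mem_iota add0n gk.
Qed.

Lemma init_elems_subset {m k} : (m <= k)%N -> {subset init_elems G m <= init_elems G k}.
Proof. by move=> mk g; rewrite !mem_init_elems => /leq_trans; apply. Qed.

Lemma init_elems_cover (F : seq G) : exists m, {subset F <= init_elems G m}.
Proof.
exists (\max_(a <- F) pickle a).+1 => a aF.
by rewrite mem_init_elems ltnS; exact: leq_bigmax_seq.
Qed.

Lemma transitive_point_hits {f : (G -> X) -> G -> X} {x} (F : seq G) (y : G -> X) :
  transitive_point f x -> exists n, {in F, iter n f x =1 y}.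
Proof.
have cyl_open : prod_open [set z : G -> X | {in F, z =1 y}].
  by move=> z /= zy; exists F => w wz a aF; rewrite wz ?zy.
have y_in : [set z : G -> X | {in F, z =1 y}] y by [].
by move=> /(_ _ cyl_open (ex_intro _ y y_in)) [_ [[n _ <-]]]; exists n.
Qed.

Lemma prod_dense_init_cylinders (A : set (G -> X)) :
  (forall y m, exists2 x, A x & {in init_elems G m, x =1 y}) -> prod_dense A.
Proof.
move=> hit U oU [y Uy]; have [F /= FU] := oU y Uy.
have [m Fm] := init_elems_cover F; have [x Ax xy] := hit y m.
by exists x; split=> //; apply: FU => a /Fm /xy.
Qed.

Section Metric.
Context {R : realType} {d : (G -> X) -> (G -> X) -> R}.
Hypothesis hd : compatible_metric d.

Lemma compatible_metric_init_ball x {r : R} : 0 < r ->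
  exists m, forall k y, (m <= k)%N -> {in init_elems G k, y =1 x} -> d x y < r.
Proof.
case: hd => _ d0 _ dtri dopen r0.
have ball_open : metric_open d [set y | d x y < r].
  move=> y /= xy; exists (r - d x y) => [|z yz /=]; first by rewrite subr_gt0.
  by have := dtri x y z; lra.
have x_in : [set y | d x y < r] x by rewrite /= (proj2 (d0 x x)).
have [F /= FU] := proj2 (dopen _) ball_open x x_in.
have [m Fm] := init_elems_cover F.
exists m => k y mk yx; apply: FU => a aF.
exact/yx/(init_elems_subset mk)/Fm.
Qed.

Lemma compatible_metric_far p q z1 z2 (e : R) :
  d p z1 < e -> d q z2 < e -> 3 * e <= d p q -> ~ d z1 z2 < e.
Proof.
case: hd => _ _ dsym dtri _ pz1 qz2 pq z12.
by have := dtri p z1 q; have := dtri z1 z2 q; have := dsym z2 q; lra.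
Qed.

End Metric.

Section Necessity.
Context {phi : G -> G} {x : G -> X} {c c' : X}.
Hypotheses (cc' : c != c') (x_trans : transitive_point (sigma_phi phi) x).

Lemma sigma_orbit_hits (F : seq G) (y : G -> X) :
  exists n, {in F, forall a, x (iter n phi a) = y a}.
Proof.
have [n xy] := transitive_point_hits F y x_trans.
by exists n => a aF; rewrite -iter_sigma_phi xy.
Qed.

Lemma transitive_sigma_phi_injective : injective phi.
Proof.
move=> a b ab; apply: contrapT => /eqP ba.
have hit v v' : exists n, x (iter n phi a) = v /\ x (iter n phi b) = v'.
  have [n xy] := sigma_orbit_hits [:: a; b] (fun g => if g == a then v else v').
  exists n; rewrite !xy ?inE ?eqxx ?orbT //.
  by rewrite eq_sym (negbTE ba).
have shifted n : x (iter n.+1 phi a) = x (iter n.+1 phi b) by rewrite !iterSr ab.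
have at0 v v' : v != v' -> x a = v.
  by move=> vv'; have [[|n] [xa xb]] := hit v v' => //; rewrite -xa -xb shifted eqxx in vv'.
have := at0 c c' cc'; rewrite (at0 c' c) 1?eq_sym // => c'c.
by move: cc'; rewrite c'c eqxx.
Qed.

Lemma transitive_sigma_phi_aperiodic a n : (0 < n)%N -> iter n phi a <> a.
Proof.
move=> n0 per.
have eventually v : exists m, forall j, (m <= j)%N -> x (iter j phi a) = v.
  have [m xv] := sigma_orbit_hits [seq iter k phi a | k <- iota 0 n] (fun=> v).
  exists m => j mj.
  have -> : j = (m + (j - m) %% n + (j - m) %/ n * n)%N.
    by rewrite -addnA [X in (m + X)%N]addnC -divn_eq subnKC.
  rewrite iterD iter_mul_periodic // iterD; apply: xv; apply: map_f.
  by rewrite mem_iota /= ltn_mod.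
have [m1 xc] := eventually c; have [m2 xc'] := eventually c'.
move: cc'; rewrite -(xc (m1 + m2)%N) ?leq_addr // (xc' (m1 + m2)%N) ?leq_addl //.
by rewrite eqxx.
Qed.

End Necessity.
End Cylinders.

Section Ratios.
Variable R : realType.

Lemma archi_ratio (e : R) : 0 < e ->
  exists K : nat, forall N M : nat, (K * N <= M)%N -> N%:R <= e * M%:R.
Proof.
move=> e0; pose K := Num.Def.archi_bound e^-1; exists K => N M KNM.
have eK : e^-1 < K%:R by apply: archi_boundP; rewrite invr_ge0 ltW.
have KNM' : K%:R * N%:R <= M%:R :> R by rewrite -natrM ler_nat.
have KN : e^-1 * N%:R <= K%:R * N%:R by apply: ler_wpM2r => //; exact: ltW.
have := ler_wpM2l (ltW e0) (le_trans KN KNM').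
by rewrite mulrA mulfV ?lt0r_neq0 // mul1r.
Qed.

Lemma limn_esup_ratio_eq1 (a : nat -> nat) :
  (forall n, (a n <= n)%N) ->
  (forall K B : nat, exists N M : nat, [/\ (B <= M)%N, (K * N < M)%N & (M - N <= a M)%N]) ->
  limn_esup (fun n => ((a n)%:R / n%:R : R)%:E) = 1%E.
Proof.
move=> a_le windows; rewrite limn_esup_lim (_ : esups _ = fun=> 1%E).
  by apply: lim_cst; exact: ereal_hausdorff.
apply: funext => n; apply/eqP; rewrite eq_le; apply/andP; split.
  apply: ge_ereal_sup => _ [m _ <-]; rewrite lee_fin.
  case: m => [|m]; first by rewrite invr0 mulr0.
  by rewrite ler_pdivrMr ?ltr0n // mul1r ler_nat.
apply/lee_addgt0Pr => e e0; have [K Ke] := archi_ratio e e0.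
have [N [M [nM KNM Ma]]] := windows K.+1 n.
have NM : (N <= M)%N by apply: leq_trans (ltnW KNM); rewrite leq_pmull.
apply: (@le_trans _ _ (((a M)%:R / M%:R)%:E + e%:E)%E); last first.
  by rewrite leeD2r //; apply: ereal_sup_ubound; exists M.
rewrite -EFinD lee_fin -lerBlDr ler_pdivlMr ?ltr0n ?(leq_ltn_trans _ KNM) //.
have := Ke N M (leq_trans (leq_mul (leqnSn K) (leqnn N)) (ltnW KNM)).
have : (M%:R - N%:R : R) <= (a M)%:R by rewrite -natrB // ler_nat.
nra.
Qed.

Lemma limn_einf_ratio_eq0 (a : nat -> nat) :
  (forall K B : nat, exists N M : nat, [/\ (B <= M)%N, (K * N < M)%N & (a M <= N)%N]) ->
  limn_einf (fun n => ((a n)%:R / n%:R : R)%:E) = 0%E.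
Proof.
move=> windows; rewrite limn_einf_lim (_ : einfs _ = fun=> 0%E).
  by apply: lim_cst; exact: ereal_hausdorff.
apply: funext => n; apply/eqP; rewrite eq_le; apply/andP; split; last first.
  by apply: le_ereal_inf_tmp => _ [m _ <-]; rewrite lee_fin divr_ge0.
apply/lee_addgt0Pr => e e0; have [K Ke] := archi_ratio e e0.
have [N [M [nM KNM aN]]] := windows K n.
rewrite add0e; apply: le_trans (ereal_inf_lbound _) _; first by exists M.
rewrite lee_fin ler_pdivrMr ?ltr0n ?(leq_ltn_trans _ KNM) //.
by apply: le_trans (Ke N M (ltnW KNM)); rewrite ler_nat.
Qed.

End Ratios.

(* On such a window [N, M), at most a fraction 1/K of the times in [0, M) lie
   outside it. *)
Definition has_long_windows (P : nat -> Prop) :=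
  forall K B : nat, exists N M : nat,
    [/\ (B <= M)%N, (K * N < M)%N & forall i, (N <= i < M)%N -> P i].

Section Frequencies.
Variables (R : realType) (X : finType) (G : countType).
Variables (d : (G -> X) -> (G -> X) -> R) (f : (G -> X) -> G -> X) (x y : G -> X).

Let close t i := d (iter i f x) (iter i f y) < t.

Lemma xi_sum t n : xi d f x y t n = (\sum_(0 <= i < n) close t i)%N.
Proof.
rewrite /xi -sum1_card big_mkord big_mkcond /=.
by apply: eq_bigr => i _; rewrite unfold_in /in_set /= asboolb /close; case: (_ < _).
Qed.

Lemma xi_le t n : (xi d f x y t n <= n)%N.
Proof. by rewrite /xi; apply: leq_trans (max_card _) _; rewrite card_ord. Qed.

Lemma xi_ge_window t N M : (N <= M)%N -> (forall i, (N <= i < M)%N -> close t i) ->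
  (M - N <= xi d f x y t M)%N.
Proof.
move=> NM closeNM; rewrite xi_sum (big_cat_nat (leq0n N) NM) /=.
rewrite (@eq_big_nat _ _ _ N M _ (fun=> 1%N)); last by move=> i /closeNM; rewrite /close => ->.
by rewrite sum_nat_const_nat muln1 leq_addl.
Qed.

Lemma xi_le_window t N M : (N <= M)%N -> (forall i, (N <= i < M)%N -> ~ close t i) ->
  (xi d f x y t M <= N)%N.
Proof.
move=> NM farNM; rewrite xi_sum (big_cat_nat (leq0n N) NM) /=.
rewrite (@eq_big_nat _ _ _ N M _ (fun=> 0%N)); last first.
  by move=> i /farNM /negP; rewrite /close => /negbTE ->.
rewrite sum_nat_const_nat muln0 addn0.
apply: (@leq_trans (\sum_(0 <= i < N) 1)%N); first by apply: leq_sum => i _; exact: leq_b1.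
by rewrite sum_nat_const_nat muln1 subn0.
Qed.

Lemma Fup_eq1_of_windows s : has_long_windows (close s) -> Fup d f x y s = 1%E.
Proof.
move=> windows; apply: limn_esup_ratio_eq1 => [n|K B]; first exact: xi_le.
have [N [M [BM KNM closeNM]]] := windows K.+1 B.
have NM : (N <= M)%N by apply: leq_trans (ltnW KNM); rewrite leq_pmull.
exists N, M; split=> //; last exact: xi_ge_window.
by apply: leq_ltn_trans KNM; rewrite leq_mul2r leqnSn orbT.
Qed.

Lemma Flow_eq0_of_windows t : has_long_windows (fun i => ~ close t i) -> Flow d f x y t = 0%E.
Proof.
move=> windows; apply: limn_einf_ratio_eq0 => K B.
have [N [M [BM KNM farNM]]] := windows K.+1 B.
have NM : (N <= M)%N by apply: leq_trans (ltnW KNM); rewrite leq_pmull.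
exists N, M; split=> //; last exact: xi_le_window.
by apply: leq_ltn_trans KNM; rewrite leq_mul2r leqnSn orbT.
Qed.

End Frequencies.

Section Construction.
Local Open Scope nat_scope.
Variables (X : finType) (G : countType) (phi : G -> G).
Hypothesis phi_inj : injective phi.
Hypothesis phi_aperiodic : forall a n, 0 < n -> iter n phi a <> a.

Lemma eventually_avoids b b' : exists L, forall j, L <= j -> iter j phi b != b'.
Proof.
have [[j0 hit]|never] := pselect (exists j0, iter j0 phi b = b'); last first.
  by exists 0 => j _; apply/eqP => hit; apply: never; exists j.
exists j0.+1 => j j0j; apply/eqP => hit'.
apply: (@phi_aperiodic b' (j - j0)); first by rewrite subn_gt0.
by rewrite -{1}hit -iterD subnK // ltnW.
Qed.

Lemma separation_exists (S : seq G) :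
  exists L, forall j b b', L <= j -> b \in S -> b' \in S -> iter j phi b != b'.
Proof.
pose avoid p := sval (cid (eventually_avoids p.1 p.2)).
exists (\max_(p <- [seq (b, b') | b <- S, b' <- S]) avoid p) => j b b' Lj bS b'S.
apply: (svalP (cid (eventually_avoids b b'))).
apply: leq_trans Lj.
by apply: (@leq_bigmax_seq _ _ _ avoid (b, b')) => //; apply: allpairs_f.
Qed.

Definition separation_time k := sval (cid (separation_exists (init_elems G k))).

Lemma separation_timeP {k j b b'} : separation_time k <= j ->
  b \in init_elems G k -> b' \in init_elems G k -> iter j phi b != b'.
Proof. exact: svalP (cid (separation_exists (init_elems G k))) j b b'. Qed.

Fixpoint start k :=
  if k is k'.+1 then (k * start k').+1 + separation_time k + k else separation_time 0.
Definition stop k := (k.+1 * start k).+1.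

Lemma separation_time_le_start k : separation_time k <= start k.
Proof. by case: k => [//|k] /=; rewrite -addnA addnCA leq_addr. Qed.

Lemma le_start k : k <= start k.
Proof. by case: k => [//|k] /=; rewrite leq_addl. Qed.

Lemma start_lt_stop k : start k < stop k.
Proof. by rewrite /stop ltnS leq_pmull. Qed.

Lemma stop_separation_le_start {k k'} : k < k' -> stop k + separation_time k' <= start k'.
Proof.
elim: k' => [//|k' IHk']; rewrite ltnS leq_eqVlt => /orP[/eqP->|kk'] /=.
  by rewrite leq_addr.
apply: leq_trans (leq_addr _ _); rewrite leq_add2r.
apply: leq_trans (ltnW (start_lt_stop k')); apply: leq_trans (IHk' kk').
by rewrite leq_addr.
Qed.

Lemma long_window K k : K <= k.+1 -> K * start k < stop k.
Proof. by move=> Kk; rewrite /stop ltnS leq_mul2r Kk orbT. Qed.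

Definition label k := logn 2 (k %/ 3).+1.

Lemma label_surj r t B : r < 3 -> exists k, [/\ k %% 3 = r, label k = t & B <= k].
Proof.
move=> r3; pose q := (2 ^ t * B.*2.+1).-1.
have qS : q.+1 = 2 ^ t * B.*2.+1 by rewrite /q prednK // muln_gt0 expn_gt0.
exists (q * 3 + r); split.
- by rewrite modnMDl modn_small.
- rewrite /label divnMDl // divn_small // addn0 qS lognM ?expn_gt0 //.
  by rewrite pfactorK // logn_coprime ?addn0 // coprime2n /= odd_double.
- have Bq : B <= q.
    rewrite -ltnS qS; apply: (@leq_trans B.*2.+1); first by rewrite ltnS -addnn leq_addr.
    by rewrite leq_pmull // expn_gt0.
  by apply: leq_trans Bq _; apply: leq_trans (leq_addr _ _); rewrite leq_pmulr.
Qed.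

Variables (c c' : X) (g0 : G).
Hypothesis cc' : c != c'.

Record seed := Seed { seed_len : nat; seed_vals : seq X; seed_bits : nat -> bool }.

(* Odd positions carry the bits, even ones the cylinder data: seeds with equal
   bits but different cylinders must still get different codes. *)
Definition seed_code (i : seed) j :=
  if odd j then seed_bits i j./2 else j./2 == pickle (seed_len i, seed_vals i).

Lemma seed_code_inj : injective seed_code.
Proof.
move=> [m s b] [m' s' b'] eq_code; have code_at j := congr1 (fun h => h j) eq_code.
have := code_at (pickle (m, s)).*2; rewrite /seed_code /= odd_double doubleK eqxx.
move=> /esym /eqP /(pcan_inj pickleK) [<- <-]; congr Seed; apply: funext => n.
by have := code_at n.*2.+1; rewrite /seed_code /= odd_double /= uphalf_double.
Qed.

Lemma seed_code_differ {i i'} B : i <> i' ->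
  exists k, [/\ k %% 3 = 1, B <= k & seed_code i (label k) != seed_code i' (label k)].
Proof.
move=> ii'; have [j code_j] : exists j, seed_code i j != seed_code i' j.
  apply: contrapT => same; apply/ii'/seed_code_inj/funext => j.
  by apply/eqP/negPn/negP => code_j; apply: same; exists j.
by have [k [k1 lk Bk]] := label_surj 1 j B isT; exists k; rewrite lk.
Qed.

Definition target k : option (nat * seq X) := unpickle (label k).

(* A transitivity task for a cylinder on I_m acts only once m <= k, so that
   the task of index k stays inside I_k. *)
Definition task_size k :=
  if k %% 3 == 2 then (if target k is Some (m, _) then minn m k else 0) else k.

Definition task_time k t := if k %% 3 == 2 then t == start k else start k <= t < stop k.

(* Tasks by k mod 3: proximity, separation by bit [label k] of the seed code,
   and transitivity (copy the cylinder [target k]). *)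
Definition task_val i k (b : G) : X :=
  match k %% 3 with
  | 0 => c
  | 1 => if seed_code i (label k) then c' else c
  | _ => if target k is Some (m, s) then nth c s (index b (init_elems G m)) else c
  end.

Lemma task_size_le k : task_size k <= k.
Proof.
rewrite /task_size; case: ifP => // _.
by case: (target k) => [[m s]|] //; exact: geq_minr.
Qed.

Lemma mem_task_init {k b} : b \in init_elems G (task_size k) -> b \in init_elems G k.
Proof. exact: init_elems_subset (task_size_le k) b. Qed.

Lemma task_time_window {k t} : task_time k t -> start k <= t < stop k.
Proof. by rewrite /task_time; case: ifP => // _ /eqP ->; rewrite leqnn start_lt_stop. Qed.

Lemma task_time_start k : task_time k (start k).
Proof. by rewrite /task_time; case: ifP; rewrite ?eqxx ?leqnn ?start_lt_stop. Qed.

Lemma task_val_indep i k b b' : k %% 3 != 2 -> task_val i k b = task_val i k b'.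
Proof. by rewrite /task_val; have := ltn_pmod k (isT : 0 < 3); case: (k %% 3) => [|[|[|]]]. Qed.

Definition assigned i g v : Prop :=
  (exists k t b, [/\ seed_len i <= k, task_time k t, b \in init_elems G (task_size k),
                    iter t phi b = g & v = task_val i k b])
  \/ (g \in init_elems G (seed_len i) /\
      v = nth c (seed_vals i) (index g (init_elems G (seed_len i)))).

(* Unassigned coordinates get the default c; no coordinate receives two values
   by assigned_functional. *)
Definition seed_point i : G -> X := fun g => xget c (assigned i g).

Lemma task_orbits_disjoint {k k' t t' b b'} : k < k' -> t < stop k -> start k' <= t' ->
  b \in init_elems G k -> b' \in init_elems G k' -> iter t phi b != iter t' phi b'.
Proof.
move=> kk' tk kt' bk bk'; apply/eqP => orbit_eq.
have tt' : t + separation_time k' <= t'.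
  by have := stop_separation_le_start kk'; lia.
have b_eq : b = iter (t' - t) phi b'.
  by apply: (inj_iter t phi_inj); rewrite orbit_eq -iterD subnKC //; lia.
have sep : separation_time k' <= t' - t by lia.
by have := separation_timeP sep bk' (init_elems_subset (ltnW kk') _ bk); rewrite -b_eq eqxx.
Qed.

Lemma task_orbit_avoids_seed {m k t b g} : m <= k -> start k <= t ->
  g \in init_elems G m -> b \in init_elems G k -> iter t phi b != g.
Proof.
move=> mk kt gm bk; apply: separation_timeP bk (init_elems_subset mk _ gm).
exact: leq_trans (separation_time_le_start k) kt.
Qed.

Lemma task_val_consistent {i k t b k' t' b'} :
  task_time k t -> b \in init_elems G (task_size k) ->
  task_time k' t' -> b' \in init_elems G (task_size k') ->
  iter t phi b = iter t' phi b' -> task_val i k b = task_val i k' b'.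
Proof.
move=> tk /mem_task_init bk tk' /mem_task_init bk' orbit_eq.
have [/andP[kt tk_lt] /andP[kt' tk'_lt]] := (task_time_window tk, task_time_window tk').
have [kk'|k'k|ekk'] := ltngtP k k'; last subst k'.
- by move/eqP: orbit_eq; rewrite (negbTE (task_orbits_disjoint kk' tk_lt kt' bk bk')).
- by move/esym/eqP: orbit_eq; rewrite (negbTE (task_orbits_disjoint k'k tk'_lt kt bk' bk)).
have [k2|k2] := eqVneq (k %% 3) 2; last exact: task_val_indep.
move: tk tk' orbit_eq; rewrite /task_time k2 eqxx => /eqP -> /eqP ->.
by move/(inj_iter _ phi_inj) ->.
Qed.

Lemma assigned_functional i g v v' : assigned i g v -> assigned i g v' -> v = v'.
Proof.
case=> [[k [t [b [ik tk bk <- ->]]]] | [gi ->]];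
  case=> [[k' [t' [b' [ik' tk' bk' orbit_eq ->]]]] | [gi' ->]] //.
- exact: task_val_consistent tk bk tk' bk' (esym orbit_eq).
- have /andP[kt _] := task_time_window tk.
  by have := task_orbit_avoids_seed ik kt gi' (mem_task_init bk); rewrite eqxx.
- have /andP[kt' _] := task_time_window tk'.
  by have := task_orbit_avoids_seed ik' kt' gi (mem_task_init bk'); rewrite orbit_eq eqxx.
Qed.

Lemma seed_point_assigned i g v : assigned i g v -> seed_point i g = v.
Proof.
move=> igv; apply: xget_unique => // v' igv'.
exact: assigned_functional igv' igv.
Qed.

Lemma seed_point_task i k t b : seed_len i <= k -> task_time k t ->
  b \in init_elems G (task_size k) -> seed_point i (iter t phi b) = task_val i k b.
Proof. by move=> *; apply: seed_point_assigned; left; exists k, t, b. Qed.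

Lemma seed_point_seed i g : g \in init_elems G (seed_len i) ->
  seed_point i g = nth c (seed_vals i) (index g (init_elems G (seed_len i))).
Proof. by move=> *; apply: seed_point_assigned; right. Qed.

Lemma iter_seed_point_window i k t a : seed_len i <= k -> k %% 3 != 2 ->
  start k <= t < stop k -> a \in init_elems G k ->
  iter t (sigma_phi phi) (seed_point i) a = task_val i k a.
Proof.
move=> ik k2 tk ak; rewrite iter_sigma_phi (@seed_point_task i k) //.
  by rewrite /task_time (negbTE k2).
by rewrite /task_size (negbTE k2).
Qed.

Lemma seed_point_transitive i : transitive_point (sigma_phi phi) (seed_point i).
Proof.
apply: prod_dense_init_cylinders => y m.
pose s := [seq y a | a <- init_elems G m].
have [k [k2 lk mk]] := label_surj 2 (pickle (m, s)) (m + seed_len i) isT.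
have tk : target k = Some (m, s) by rewrite /target lk pickleK.
exists (iter (start k) (sigma_phi phi) (seed_point i)); first by exists (start k).
move=> a am; rewrite iter_sigma_phi (@seed_point_task i k).
- by rewrite /task_val k2 tk (nth_map a) ?index_mem // nth_index.
- by apply: leq_trans mk; rewrite leq_addl.
- exact: task_time_start.
- by rewrite /task_size k2 tk (minn_idPl _) //; apply: leq_trans mk; rewrite leq_addr.
Qed.

Lemma seed_points_dense : prod_dense (range seed_point).
Proof.
apply: prod_dense_init_cylinders => y m.
pose i := Seed m [seq y a | a <- init_elems G m] (fun=> false).
exists (seed_point i); first by exists i.
by move=> a am; rewrite seed_point_seed //= (nth_map a) ?index_mem // nth_index.
Qed.

Lemma seed_point_inj : injective seed_point.
Proof.
move=> i i' eq_point; apply: contrapT => ii'.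
have [k [k1 kB code_k]] := seed_code_differ (seed_len i + seed_len i' + (pickle g0).+1) ii'.
have g0k : g0 \in init_elems G (task_size k).
  by rewrite /task_size k1 mem_init_elems; lia.
have [ik i'k] : seed_len i <= k /\ seed_len i' <= k by split; lia.
have := @seed_point_task i k _ g0 ik (task_time_start k) g0k.
rewrite eq_point (@seed_point_task i' k _ g0 i'k (task_time_start k) g0k) /task_val k1.
move: code_k; case: (seed_code i _); case: (seed_code i' _) => // _ e;
  by move: cc'; rewrite e eqxx.
Qed.

Lemma seed_points_not_countable : ~ countable (range seed_point).
Proof.
apply: (@not_countable_of_bits _ _ (fun b => seed_point (Seed 0 [::] b))).
  by move=> b b' /seed_point_inj [].
by move=> b; exists (Seed 0 [::] b).
Qed.

Variables (R : realType) (d : (G -> X) -> (G -> X) -> R).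
Hypothesis hd : compatible_metric d.
Local Open Scope ring_scope.

Lemma cst_dist_gt0 : 0 < d (cst c) (cst c') / 3 :> R.
Proof.
case: hd => d_ge0 d0 _ _ _; rewrite divr_gt0 // lt0r d_ge0 andbT.
apply/eqP => /d0 /(congr1 (fun h => h g0)) /= ecc.
by move: cc'; rewrite ecc eqxx.
Qed.

Lemma seed_points_Fup i i' s : 0 < s ->
  Fup d (sigma_phi phi) (seed_point i) (seed_point i') s = 1%E.
Proof.
move=> s0; apply: Fup_eq1_of_windows => K B.
have [m near_c] := compatible_metric_init_ball hd (cst c) (divr_gt0 s0 (ltr0Sn _ 1)).
pose k := (3 * (K + B + m + seed_len i + seed_len i'))%N.
have k0 : (k %% 3 = 0)%N by rewrite /k modnMr.
have kge : (K + B + m + seed_len i + seed_len i' <= k)%N by rewrite /k leq_pmull.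
exists (start k), (stop k); split.
- by have := le_start k; have := start_lt_stop k; lia.
- by apply: long_window; lia.
move=> t tk.
have orbit_near j : (seed_len j <= k)%N ->
    d (cst c) (iter t (sigma_phi phi) (seed_point j)) < s / 2.
  move=> jk; apply: (near_c k) => [|a ak]; first lia.
  by rewrite (@iter_seed_point_window j k) ?k0 // /task_val k0.
case: hd => _ _ dsym dtri _.
have := dtri (iter t (sigma_phi phi) (seed_point i)) (cst c) (iter t (sigma_phi phi) (seed_point i')).
have [ik i'k] : (seed_len i <= k)%N /\ (seed_len i' <= k)%N by split; lia.
by rewrite [d _ (cst c)]dsym; have := orbit_near i ik; have := orbit_near i' i'k; lra.
Qed.

Lemma seed_points_Flow i i' : i <> i' ->
  Flow d (sigma_phi phi) (seed_point i) (seed_point i') (d (cst c) (cst c') / 3) = 0%E.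
Proof.
move=> ii'; set e := d (cst c) (cst c') / 3.
apply: Flow_eq0_of_windows => K B.
have [m near_c] := compatible_metric_init_ball hd (cst c) cst_dist_gt0.
have [m' near_c'] := compatible_metric_init_ball hd (cst c') cst_dist_gt0.
have [k [k1 kB code_k]] := seed_code_differ (K + B + m + m' + seed_len i + seed_len i')%N ii'.
exists (start k), (stop k); split.
- by have := le_start k; have := start_lt_stop k; lia.
- by apply: long_window; lia.
move=> t tk.
have orbit j : (seed_len j <= k)%N -> {in init_elems G k,
    iter t (sigma_phi phi) (seed_point j) =1 cst (if seed_code j (label k) then c' else c)}.
  by move=> jk a ak; rewrite (@iter_seed_point_window j k) ?k1 // /task_val k1.
have [mk m'k] : (m <= k)%N /\ (m' <= k)%N by split; lia.
have [ik i'k] : (seed_len i <= k)%N /\ (seed_len i' <= k)%N by split; lia.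
have far := compatible_metric_far hd.
have [dsym e3] : d (cst c') (cst c) = d (cst c) (cst c') /\ 3 * e = d (cst c) (cst c').
  by case: hd => _ _ dsym _ _; rewrite dsym /e; split=> //; lra.
move: (orbit i ik) (orbit i' i'k) code_k.
case: (seed_code i _); case: (seed_code i' _) => // oi oi' _.
  by apply: far (near_c' k _ m'k oi) (near_c k _ mk oi') _; rewrite dsym e3.
by apply: far (near_c k _ mk oi) (near_c' k _ m'k oi') _; rewrite e3.
Qed.

Lemma seed_points_chaotic : transitive_distributional_chaotic d (sigma_phi phi).
Proof.
exists (range seed_point), (d (cst c) (cst c') / 3); split.
- exact: seed_points_dense.
- exact: seed_points_not_countable.
- by move=> _ [i _ <-]; exact: seed_point_transitive.
- exact: cst_dist_gt0.
move=> _ _ [i _ <-] [i' _ <-] ne; split=> [s s0|]; first exact: seed_points_Fup.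
by apply: seed_points_Flow => ii'; apply: ne; rewrite ii'.
Qed.

End Construction.

Theorem theorem5p4 (R : realType) (X : finType) (G : countType)
  (d : (G -> X) -> (G -> X) -> R) (phi : G -> G) :
  (1 < #|X|)%N -> inhabited G -> compatible_metric d ->
  (transitive_distributional_chaotic d (sigma_phi phi) <->
   (injective phi /\ forall (a : G) (n : nat), (0 < n)%N -> ssrnat.iter n phi a <> a)).
Proof.
move=> /card_gt1P [c [c' [_ _ cc']]] [g0] hd; split.
- move=> [A [eps [_ A_uncountable A_trans _ _]]].
  have [x Ax] : A !=set0 by apply/set0P/negP => /eqP A0; apply: A_uncountable; rewrite A0.
  split; [exact: transitive_sigma_phi_injective cc' (A_trans x Ax)
         | exact: transitive_sigma_phi_aperiodic cc' (A_trans x Ax)].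
- move=> [phi_inj phi_aperiodic].
  exact: (@seed_points_chaotic X G phi phi_inj phi_aperiodic c c' g0 cc' R d hd).
Qed.
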